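(* For every positive integer $n$, the number of pseudo-symmetric gapsets in $\mathcal{G}_{2n+1}(3n+2)$ is $2^{n-1}$.
   Context: A gapset is a finite set $G\subset\mathbb{N}=\{1,2,\dots\}$ such that whenever $z\in G$ and $z=x+y$ with $x,y\in\mathbb{N}$, then $x\in G$ or $y\in G$; its genus is $g=\#G$. Writing $G=\{\ell_1<\dots<\ell_g\}$, the Frobenius number is $F(G)=\ell_g$; $G$ is pseudo-symmetric if $F(G)=2g-2$. $G$ is pure $\kappa$-sparse if $\ell_{i+1}-\ell_i\le\kappa$ for all $i$ with equality for some $i$; $\mathcal{G}_\kappa(g)$ is the set of pure $\kappa$-sparse gapsets of genus $g$. *)

From mathcomp Require Import all_boot all_order.
From mathcomp Require Import finmap.
Set Implicit Arguments. Unset Strict Implicit. Unset Printing Implicit Defensive.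
Local Open Scope fset_scope.

Definition gapset (G : {fset nat}) : Prop :=
  0 \notin G /\
  forall z x y : nat, z \in G -> 0 < x -> 0 < y -> z = (x + y)%N ->
    (x \in G) || (y \in G).

Definition genus (G : {fset nat}) : nat := #|` G|.

(* the elements of G listed increasingly: l_1 < ... < l_g
   (here 0-indexed: (gap_list G)`_0 < ... ) *)
Definition gap_list (G : {fset nat}) : seq nat := sort leq (enum_fset G).

Definition frobenius (G : {fset nat}) : nat := \max_(x <- enum_fset G) x.

Definition pseudo_symmetric (G : {fset nat}) : Prop :=
  frobenius G = (2 * genus G - 2)%N.

Definition pure_sparse (kappa : nat) (G : {fset nat}) : Prop :=
  let l := gap_list G in
  (forall i, i.+1 < size l -> (nth 0 l i.+1 - nth 0 l i <= kappa)%N) /\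
  (exists i, i.+1 < size l /\ (nth 0 l i.+1 - nth 0 l i)%N = kappa).

Definition in_G (kappa g : nat) (G : {fset nat}) : Prop :=
  gapset G /\ pure_sparse kappa G /\ genus G = g.

From mathcomp Require Import all_boot all_order finmap zify.
Set Implicit Arguments. Unset Strict Implicit.

(* A pseudo-symmetric gapset G of genus m+1 has Frobenius number 2m, and counting
   the pairs {x, 2m - x} shows that it is determined by the symmetry
   x \in G <-> 2m - x \notin G for 0 < x < m, together with m, 2m \in G.
   Take m = 3n+1. If G is pure (2n+1)-sparse, a gap a < a + 2n+1 between consecutive
   elements puts 1, ..., 2n in G, because each such x pairs with a + 2n+1 - x, which
   lies strictly inside the gap. The element of G preceding 6n+2 lies within 2n+1 of
   it and its mirror image is not in G, so 2n+1 \notin G. Symmetry then fixes G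
   except on [2n+2, 3n], where it is arbitrary: these gapsets correspond to the
   2^(n-1) subsets of that interval. *)

Section GapList.
Variable G : {fset nat}.
Local Notation l := (gap_list G).

Lemma gap_list_sorted : sorted ltn l.
Proof.
rewrite ltn_sorted_uniq_leq sort_uniq fset_uniq /=.
exact: (sort_sorted leq_total).
Qed.

Lemma mem_gap_list x : (x \in l) = (x \in G).
Proof. by rewrite mem_sort. Qed.

Lemma size_gap_list : size l = #|` G|%fset.
Proof. by rewrite size_sort. Qed.

Lemma gap_list_ltn i j : i < size l -> j < size l -> (nth 0 l i < nth 0 l j) = (i < j).
Proof.
move=> hi hj; have mono := sorted_ltn_nth ltn_trans 0 gap_list_sorted.
case: (ltngtP i j) => [ij|ji|->]; last by rewrite ltnn.
- exact: mono.
- by apply/negbTE; rewrite -leqNgt ltnW ?mono.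
Qed.

Lemma gap_list_leq i j : i < size l -> j < size l -> (nth 0 l i <= nth 0 l j) = (i <= j).
Proof. by move=> hi hj; rewrite leqNgt gap_list_ltn // -leqNgt. Qed.

Lemma mem_nth_gap_list i : i < size l -> nth 0 l i \in G.
Proof. by move=> hi; rewrite -mem_gap_list mem_nth. Qed.

Lemma gap_list_index x : x \in G -> exists2 i, i < size l & nth 0 l i = x.
Proof.
rewrite -mem_gap_list => xl.
by exists (index x l); rewrite ?index_mem ?nth_index.
Qed.

Lemma gap_list_steps_leq k :
  (forall a b, a \in G -> b \in G -> a < b -> exists2 c, c \in G & a < c <= a + k) ->
  forall i, i.+1 < size l -> nth 0 l i.+1 - nth 0 l i <= k.
Proof.
move=> next i hi; have hi' : i < size l by lia.
have [|c cG /andP[ac ck]] := next _ _ (mem_nth_gap_list hi') (mem_nth_gap_list hi).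
  by rewrite gap_list_ltn.
have [j hj ej] := gap_list_index cG; subst c.
move: ac ck; rewrite gap_list_ltn // => ij.
by have := gap_list_leq hi hj; rewrite ij; lia.
Qed.

Lemma gap_list_gapP k : 0 < k ->
  (exists i, i.+1 < size l /\ nth 0 l i.+1 - nth 0 l i = k) <->
  (exists a, [/\ a \in G, a + k \in G & forall c, c \in G -> a < c -> a + k <= c]).
Proof.
move=> k0; split=> [[i [hi gap_i]]|[a [aG akG above]]].
- have hi' : i < size l by lia.
  have lt_i : nth 0 l i < nth 0 l i.+1 by rewrite gap_list_ltn.
  exists (nth 0 l i); have -> : nth 0 l i + k = nth 0 l i.+1 by lia.
  split; rewrite ?mem_nth_gap_list // => c cG.
  have [j hj <-] := gap_list_index cG.
  by rewrite gap_list_ltn // gap_list_leq.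
- have [i hi ai] := gap_list_index aG.
  have [j hj aj] := gap_list_index akG.
  have ij : i < j by rewrite -gap_list_ltn // ai aj; lia.
  have hi1 : i.+1 < size l by lia.
  exists i; split=> //.
  have := above _ (mem_nth_gap_list hi1).
  have := gap_list_leq hi1 hj.
  rewrite -aj -ai gap_list_ltn // ij ltnSn; lia.
Qed.

Lemma gap_below_max k M : 1 < size l ->
  (forall i, i.+1 < size l -> nth 0 l i.+1 - nth 0 l i <= k) ->
  M \in G -> (forall x, x \in G -> x <= M) ->
  exists c, [/\ c \in G, c < M & M <= c + k].
Proof.
move=> l2 steps MG Mmax.
have [j hj ej] := gap_list_index MG; subst M.
have last_lt : (size l).-1 < size l by lia.
have jlast : j = (size l).-1.
  by have := Mmax _ (mem_nth_gap_list last_lt); rewrite gap_list_leq //; lia.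
exists (nth 0 l (size l).-2); split.
- by apply: mem_nth_gap_list; lia.
- by rewrite gap_list_ltn; lia.
- have prev : (size l).-2.+1 = j by lia.
  by have := steps (size l).-2; rewrite prev; lia.
Qed.

End GapList.

Lemma mem_bigmax_seq (s : seq nat) : 0 < \max_(x <- s) x -> \max_(x <- s) x \in s.
Proof.
elim: s => [|a s IH]; first by rewrite big_nil.
rewrite big_cons in_cons => pos.
case: (leqP (\max_(x <- s) x) a) => h.
- by rewrite eqxx.
- by rewrite IH ?orbT //; lia.
Qed.

Lemma mem_frobenius G : 0 < frobenius G -> frobenius G \in G.
Proof. exact: mem_bigmax_seq. Qed.

Lemma frobenius_ub G x : x \in G -> x <= frobenius G.
Proof. by move=> xG; apply: (@leq_bigmax_seq _ _ xpredT id). Qed.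

Lemma frobenius_max G F : F \in G -> (forall x, x \in G -> x <= F) -> frobenius G = F.
Proof.
move=> FG F_max; apply/eqP; rewrite eqn_leq frobenius_ub // andbT.
by apply/bigmax_leqP_seq => x xG _; apply: F_max.
Qed.

Lemma gapset_gt0 G x : gapset G -> x \in G -> 0 < x.
Proof. by move=> [G0 _] xG; rewrite lt0n; apply: contraNneq G0 => <-. Qed.

Section SymmetricGapset.
Variables (m : nat) (G : {fset nat}).
Hypotheses (m_gt0 : 0 < m) (gapG : gapset G) (FG : 2 * m \in G).

Lemma gapset_pair x : 0 < x < 2 * m -> (x \in G) || (2 * m - x \in G).
Proof. by move=> hx; apply: gapG.2 FG _ _ _; lia. Qed.

Lemma half_in_gapset : m \in G.
Proof.
by have := gapset_pair (x := m); rewrite (_ : 2 * m - m = m) ?orbb; [apply; lia | lia].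
Qed.

Definition pair_rep x := if x \in G then x else 2 * m - x.

Definition pair_reps : {fset nat} :=
  [fset x in map pair_rep (iota 1 m.-1) ++ [:: m; 2 * m]]%fset.

Lemma mem_pair_reps x :
  (x \in pair_reps) = [|| x \in map pair_rep (iota 1 m.-1), x == m | x == 2 * m].
Proof. by rewrite !inE orbF. Qed.

Lemma card_pair_reps : #|` pair_reps|%fset = m.+1.
Proof.
rewrite card_fseq undup_id; first by rewrite size_cat size_map size_iota /=; lia.
rewrite cat_uniq /= andbT !inE orbF map_inj_in_uniq ?iota_uniq => [|x y]; last first.
  by rewrite !mem_iota /pair_rep; case: ifP; case: ifP; lia.
have not_rep z : (z == m) || (z == 2 * m) -> z \notin map pair_rep (iota 1 m.-1).
  by move=> hz; apply/mapP => -[y]; rewrite mem_iota /pair_rep; case: ifP; lia.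
by rewrite negb_or !not_rep ?eqxx ?orbT //=; lia.
Qed.

Lemma pair_reps_sub : (pair_reps `<=` G)%fset.
Proof.
apply/fsubsetP => x; rewrite mem_pair_reps => /or3P[/mapP[y]|/eqP->|/eqP->//].
- rewrite mem_iota /pair_rep => hy ->; case: ifP => // yG.
  by have := gapset_pair (x := y); rewrite yG; apply; lia.
- exact: half_in_gapset.
Qed.

Lemma genus_symmetricP : (forall x, x \in G -> x <= 2 * m) ->
  #|` G|%fset = m.+1 <-> forall x, 0 < x < m -> (x \in G) = (2 * m - x \notin G).
Proof.
move=> G_le; split=> [cardG x hx | sym].
- have G_reps : G = pair_reps.
    by apply/eqP; rewrite eq_sym eqEfcard pair_reps_sub cardG card_pair_reps /=.
  case xG: (x \in G); last first.
    by symmetry; apply: negbF; have := gapset_pair (x := x); rewrite xG; apply; lia.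
  symmetry; apply/negP; rewrite G_reps mem_pair_reps => /or3P[/mapP[y]||]; try lia.
  rewrite mem_iota /pair_rep; case: ifP => [|yG] hy; first lia.
  by move=> eq_xy; rewrite (_ : x = y) ?yG in xG; lia.
- suff -> : G = pair_reps by exact: card_pair_reps.
  apply/eqP; rewrite eqEfsubset pair_reps_sub andbT; apply/fsubsetP => x xG.
  have := G_le _ xG; have := gapset_gt0 gapG xG; rewrite mem_pair_reps => x0 x_le.
  case: (ltngtP x m) => [x_lt|x_gt|->]; last by rewrite orbT.
    by apply/orP; left; apply/mapP; exists x; rewrite ?mem_iota /pair_rep ?xG; lia.
  case: (ltngtP x (2 * m)) => [x_lt|x_gt2|->]; [|lia|by rewrite !orbT].
  apply/orP; left; apply/mapP; exists (2 * m - x); first by rewrite mem_iota; lia.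
  by rewrite /pair_rep sym ?subKn ?xG //; lia.
Qed.

End SymmetricGapset.

Lemma gapset_below_gap G a k : gapset G -> a \in G -> a + k \in G ->
  (forall c, c \in G -> a < c -> a + k <= c) -> forall x, 0 < x < k -> x \in G.
Proof.
move=> [_ gapG] aG akG above x hx.
have /orP[//|inside] := gapG (a + k) x (a + k - x) akG ltac:(lia) ltac:(lia) ltac:(lia).
by have := above _ inside; lia.
Qed.

Section Construction.
Variable n : nat.

(* The pseudo-symmetric sparse gapset with free part A; only the elements of A in
   [2n+2, 3n] matter. *)
Definition pss_mem (A : {fset nat}) x : bool :=
  [|| 0 < x <= 2 * n, x == 3 * n + 1, x == 4 * n + 1, x == 6 * n + 2,
      (2 * n + 2 <= x <= 3 * n) && (x \in A) |
      (3 * n + 2 <= x <= 4 * n) && (6 * n + 2 - x \notin A)].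

Definition pss_gapset A : {fset nat} :=
  [fset x in iota 0 (6 * n + 3) | pss_mem A x]%fset.

Lemma mem_pss_gapset A x : (x \in pss_gapset A) = pss_mem A x.
Proof.
rewrite !inE /= mem_iota andb_idl // /pss_mem.
by case: (x \in A); case: (6 * n + 2 - x \in A); lia.
Qed.

Lemma pss_gapset_bound A x : x \in pss_gapset A -> 0 < x <= 6 * n + 2.
Proof.
by rewrite mem_pss_gapset /pss_mem; case: (x \in A); case: (6 * n + 2 - x \in A); lia.
Qed.

Lemma pss_gapset_sym A x : 0 < x <= 3 * n ->
  (x \in pss_gapset A) = (6 * n + 2 - x \notin pss_gapset A).
Proof.
move=> hx; rewrite !mem_pss_gapset /pss_mem subKn; last lia.
by case: (x \in A); case: (6 * n + 2 - x \in A); lia.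
Qed.

Lemma frobenius_mem_pss_gapset A : 6 * n + 2 \in pss_gapset A.
Proof. by rewrite mem_pss_gapset /pss_mem eqxx !orbT. Qed.

Lemma pss_gapset_low A x : 0 < x <= 2 * n -> x \in pss_gapset A.
Proof. by move=> hx; rewrite mem_pss_gapset /pss_mem hx. Qed.

Lemma pss_gapset_top A x : x \in pss_gapset A -> 4 * n + 1 < x -> x = 6 * n + 2.
Proof.
by rewrite mem_pss_gapset /pss_mem; case: (x \in A); case: (6 * n + 2 - x \in A); lia.
Qed.

Lemma pss_gapset_gapset A : gapset (pss_gapset A).
Proof.
split=> [|z x y zG x0 y0 zxy]; first by apply/negP => /pss_gapset_bound.
subst z; case: (leqP x (2 * n)) => [x_le|x_gt].
  by rewrite mem_pss_gapset /pss_mem x0 x_le.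
case: (leqP y (2 * n)) => [y_le|y_gt].
  by rewrite orbC mem_pss_gapset /pss_mem y0 y_le.
have xyF : x + y = 6 * n + 2 by apply: pss_gapset_top zG _; lia.
case: (leqP x (3 * n)) => [x_le3|x_gt3].
  by rewrite pss_gapset_sym 1?(_ : 6 * n + 2 - x = y) ?orNb //; lia.
case: (leqP y (3 * n)) => [y_le3|y_gt3].
  by rewrite (pss_gapset_sym _ (x := y)) 1?(_ : 6 * n + 2 - y = x) ?orbN //; lia.
by rewrite (_ : x = 3 * n + 1) 1?mem_pss_gapset /pss_mem ?eqxx ?orbT //; lia.
Qed.

Lemma genus_pss_gapset A : #|` pss_gapset A|%fset = 3 * n + 2.
Proof.
have F2 : 2 * (3 * n + 1) = 6 * n + 2 by lia.
have FA := frobenius_mem_pss_gapset A; rewrite -F2 in FA.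
rewrite (_ : 3 * n + 2 = (3 * n + 1).+1); last lia.
apply/(genus_symmetricP _ (pss_gapset_gapset A) FA) => [|x /pss_gapset_bound|x hx]; try lia.
by rewrite F2 pss_gapset_sym //; lia.
Qed.

Lemma frobenius_pss_gapset A : frobenius (pss_gapset A) = 6 * n + 2.
Proof.
apply: frobenius_max (frobenius_mem_pss_gapset A) _ => x /pss_gapset_bound; lia.
Qed.

Lemma pss_gapset_next A a b : a \in pss_gapset A -> b \in pss_gapset A -> a < b ->
  exists2 c, c \in pss_gapset A & a < c <= a + (2 * n + 1).
Proof.
move=> aG bG ab; have := pss_gapset_bound aG; have := pss_gapset_bound bG.
move=> hb ha; have [a_le|a_gt] := leqP a (4 * n).
- have [a_lt|a_ge] := ltnP a (2 * n).
    by exists a.+1; [apply: pss_gapset_low | ]; lia.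
  exists (if a <= 3 * n then 3 * n + 1 else 4 * n + 1); last by case: ifP; lia.
  by rewrite mem_pss_gapset /pss_mem; case: ifP; rewrite eqxx !orbT.
- exists (6 * n + 2); first exact: frobenius_mem_pss_gapset.
  by have := pss_gapset_top aG; lia.
Qed.

Lemma pss_gapset_in A :
  in_G (2 * n + 1) (3 * n + 2) (pss_gapset A) /\ pseudo_symmetric (pss_gapset A).
Proof.
split; last by rewrite /pseudo_symmetric frobenius_pss_gapset /genus genus_pss_gapset; lia.
split; [exact: pss_gapset_gapset | split; [split | exact: genus_pss_gapset]].
- exact/gap_list_steps_leq/pss_gapset_next.
- apply/gap_list_gapP; first lia.
  exists (4 * n + 1); rewrite (_ : 4 * n + 1 + (2 * n + 1) = 6 * n + 2); last lia.
  split; [|exact: frobenius_mem_pss_gapset|move=> c cG c_gt].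
    by rewrite mem_pss_gapset /pss_mem eqxx !orbT.
  by have := pss_gapset_top cG; lia.
Qed.

End Construction.

Definition middle n : {fset nat} := [fset x in iota (2 * n + 2) (n - 1)]%fset.

Lemma mem_middle n x : (x \in middle n) = (2 * n + 2 <= x < 2 * n + 2 + (n - 1)).
Proof. by rewrite !inE mem_iota. Qed.

Lemma card_middle n : #|` middle n|%fset = n - 1.
Proof. by rewrite card_fseq undup_id ?iota_uniq // size_iota. Qed.

Section Classification.
Variables (n : nat) (G : {fset nat}).
Hypotheses (n_gt0 : 0 < n) (G_in : in_G (2 * n + 1) (3 * n + 2) G)
  (G_pseudo : pseudo_symmetric G).

Let gapG : gapset G := G_in.1.
Let genusG : #|` G|%fset = 3 * n + 2 := G_in.2.2.

Lemma frobenius_sparse : frobenius G = 6 * n + 2.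
Proof. by move: G_pseudo; rewrite /pseudo_symmetric /genus genusG; lia. Qed.

Lemma frobenius_mem_sparse : 6 * n + 2 \in G.
Proof.
by rewrite -frobenius_sparse; apply: mem_frobenius; rewrite frobenius_sparse; lia.
Qed.

Lemma sparse_le x : x \in G -> x <= 6 * n + 2.
Proof. by rewrite -frobenius_sparse; apply: frobenius_ub. Qed.

Lemma sparse_sym x : 0 < x < 6 * n + 2 -> x != 3 * n + 1 ->
  (x \in G) = (6 * n + 2 - x \notin G).
Proof.
move=> hx x_ne; have F2 : 6 * n + 2 = 2 * (3 * n + 1) by lia.
have FG := frobenius_mem_sparse; rewrite F2 in FG.
have G_le y : y \in G -> y <= 2 * (3 * n + 1) by rewrite -F2; apply: sparse_le.
have sym : forall y, 0 < y < 3 * n + 1 -> (y \in G) = (2 * (3 * n + 1) - y \notin G).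
  by apply/(genus_symmetricP _ gapG FG G_le); have := genusG; lia.
rewrite F2; have [x_lt|x_gt] := ltnP x (3 * n + 1); first by apply: sym; lia.
by rewrite (sym (2 * (3 * n + 1) - x)) ?subKn ?negbK //; lia.
Qed.

Lemma sparse_low x : 0 < x <= 2 * n -> x \in G.
Proof.
have [_ [[_ max_gap] _]] := G_in.
have [|a [aG akG above]] := (gap_list_gapP _ _).1 max_gap; first lia.
by move=> hx; apply: (gapset_below_gap gapG aG akG above); lia.
Qed.

Lemma sparse_notin : 2 * n + 1 \notin G.
Proof.
have [_ [[steps _] _]] := G_in.
have [|c [cG c_lt c_ge]] := gap_below_max _ steps frobenius_mem_sparse sparse_le.
  by rewrite size_gap_list genusG; lia.
have Fc : 6 * n + 2 - c \notin G by rewrite -sparse_sym //; lia.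
have [c_low|<- //] : 6 * n + 2 - c <= 2 * n \/ 6 * n + 2 - c = 2 * n + 1 by lia.
by rewrite sparse_low in Fc; lia.
Qed.

Lemma sparse_pss_gapsetE : G = pss_gapset n (middle n `&` G)%fset.
Proof.
have FG := frobenius_mem_sparse.
rewrite (_ : 6 * n + 2 = 2 * (3 * n + 1)) in FG; last lia.
have fixed y : y = 3 * n + 1 \/ y = 6 * n + 2 -> y \in G.
  by case=> ->; [apply: half_in_gapset gapG FG; lia | exact: frobenius_mem_sparse].
have notin y : y = 2 * n + 1 -> y \notin G by move=> ->; apply: sparse_notin.
have bounds y : y \in G -> 0 < y <= 6 * n + 2.
  by move=> yG; rewrite (gapset_gt0 gapG yG) sparse_le.
apply/fsetP => x; rewrite mem_pss_gapset /pss_mem !in_fsetI !mem_middle.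
have := sparse_sym (x := x); have := sparse_low (x := x).
have := sparse_low (x := 6 * n + 2 - x); have := notin x; have := notin (6 * n + 2 - x).
have := fixed x; have := bounds x; have := bounds (6 * n + 2 - x).
by case: (x \in G); case: (6 * n + 2 - x \in G); lia.
Qed.

End Classification.

Lemma middle_pss_gapset n A :
  (A `<=` middle n)%fset -> (middle n `&` pss_gapset n A)%fset = A.
Proof.
move=> /fsubsetP A_mid; apply/fsetP => x; rewrite in_fsetI mem_pss_gapset /pss_mem.
have := A_mid x; rewrite !mem_middle.
by case: (x \in A); case: (6 * n + 2 - x \in A); lia.
Qed.

Lemma pss_gapset_inj n : {in fpowerset (middle n) &, injective (pss_gapset n)}.
Proof.
move=> A1 A2; rewrite !fpowersetE => A1_mid A2_mid eqA.
by rewrite -(middle_pss_gapset A1_mid) eqA middle_pss_gapset.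
Qed.

Local Open Scope fset_scope.

Theorem mainTheorem5 (n : nat) (hn : 0 < n) :
  exists S : {fset {fset nat}},
    (forall G : {fset nat},
        G \in S <-> (in_G (2 * n + 1)%N (3 * n + 2)%N G /\ pseudo_symmetric G)) /\
    #|` S| = (2 ^ (n - 1))%N.
Proof.
exists (pss_gapset n @` fpowerset (middle n)); split.
- move=> G; split=> [/imfsetP [A _ ->] | [G_in G_pseudo]]; first exact: pss_gapset_in.
  apply/imfsetP; exists (middle n `&` G); first by rewrite fpowersetE fsubsetIl.
  exact: sparse_pss_gapsetE.
- have /card_in_imfsetP/eqP -> := @pss_gapset_inj n.
  by rewrite card_fpowerset card_middle.
Qed.
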